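(* If the additive group of a ring $K$ is finitely generated, then $K$ is finitely separable.
   Context: Rings are associative and not necessarily unital. A ring $K$ is finitely separable if for every $a\in K$ and every subring $A\subseteq K$ with $a\notin A$ there exist a finite ring $F$ and a homomorphism $\varphi:K\to F$ with $\varphi(a)\notin\varphi(A)$. *)

From HB Require Import structures.
From mathcomp Require Import all_boot all_order all_algebra.
Set Implicit Arguments. Unset Strict Implicit. Unset Printing Implicit Defensive.
Import GRing.Theory.
Local Open Scope ring_scope.

(* Associative, not necessarily unital rings: an additive abelian group
   with an associative, bi-distributive multiplication (no unit required). *)
Record nuRing := NuRing {
  nu_sort :> zmodType;
  nu_mul : nu_sort -> nu_sort -> nu_sort;
  nu_mulA : associative nu_mul;
  nu_mulDl : left_distributive nu_mul +%R;
  nu_mulDr : right_distributive nu_mul +%R }.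

Definition nu_subring (K : nuRing) (A : pred K) : Prop :=
  [/\ 0 \in A,
      forall x y, x \in A -> y \in A -> x - y \in A &
      forall x y, x \in A -> y \in A -> nu_mul x y \in A].

Definition nu_hom (K F : nuRing) (f : K -> F) : Prop :=
  (forall x y, f (x + y) = f x + f y) /\
  (forall x y, f (nu_mul x y) = nu_mul (f x) (f y)).

Definition nu_finite (F : nuRing) : Prop :=
  exists s : seq F, forall x : F, x \in s.

Definition additively_fg (K : nuRing) : Prop :=
  exists s : seq K, forall x : K,
    exists c : 'I_(size s) -> int, x = \sum_(i < size s) s`_i *~ c i.

Definition finitely_separable (K : nuRing) : Prop :=
  forall (a : K) (A : pred K), nu_subring A -> a \notin A ->
    exists (F : nuRing) (f : K -> F),
      [/\ nu_finite F, nu_hom f & forall b, b \in A -> f b != f a].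

From HB Require Import structures.
From mathcomp Require Import all_boot all_order all_algebra.
From mathcomp Require Import boolp zify ring.

(* A subgroup A of a finitely generated abelian group G is closed in the
   profinite topology: if a is not in A, then a is not in A + mG for some
   m > 0.  Pulling A back along a surjection Z^n -> G, this is proved by
   induction on n: the last coordinates of the pulled-back subgroup form a
   subgroup dZ of Z, which lets one reduce to the subgroup of vectors with
   last coordinate 0.  As mK is a two-sided ideal of K, the quotient K/mK is
   a finite ring, and the projection onto it separates a from A. *)
Set Implicit Arguments. Unset Strict Implicit. Unset Printing Implicit Defensive.
Import GRing.Theory.
Local Open Scope ring_scope.

Definition subgroup (V : zmodType) (L : V -> Prop) :=
  L 0 /\ forall x y, L x -> L y -> L (x - y).

Section Subgroups.
Variables (V : zmodType) (L : V -> Prop) (sL : subgroup L).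

Lemma subgroupN x : L x -> L (- x).
Proof. by move=> Lx; rewrite -sub0r; apply: sL.2 => //; exact: sL.1. Qed.

Lemma subgroupD x y : L x -> L y -> L (x + y).
Proof. by move=> Lx Ly; rewrite -[y]opprK; apply: sL.2 => //; exact: subgroupN. Qed.

Lemma subgroupMz x k : L x -> L (x *~ k).
Proof.
move=> Lx; have LMn n : L (x *+ n).
  by elim: n => [|n IHn]; [rewrite mulr0n; exact: sL.1 | rewrite mulrS; exact: subgroupD].
by case: k => n; [|rewrite NegzE mulrNz; apply: subgroupN]; exact: LMn.
Qed.

Lemma subgroup_kernel (W : zmodType) (f : {additive V -> W}) :
  subgroup (fun x => L x /\ f x = 0).
Proof.
split=> [|x y [Lx fx] [Ly fy]]; first by rewrite raddf0; split=> //; exact: sL.1.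
by rewrite raddfB fx fy subr0; split=> //; exact: sL.2.
Qed.

Lemma subgroup_image (W : zmodType) (f : {additive V -> W}) :
  subgroup (fun y => exists2 x, L x & f x = y).
Proof.
split=> [|u v [x Lx <-] [y Ly <-]]; first by exists 0; [exact: sL.1 | rewrite raddf0].
by exists (x - y); [exact: sL.2 | rewrite raddfB].
Qed.

Lemma subgroupI (L' : V -> Prop) : subgroup L' -> subgroup (fun x => L x /\ L' x).
Proof.
move=> sL'; split=> [|x y [Lx L'x] [Ly L'y]].
  by split; [exact: sL.1 | exact: sL'.1].
by split; [exact: sL.2 | exact: sL'.2].
Qed.

End Subgroups.

Lemma subgroup_preim (V W : zmodType) (f : {additive V -> W}) (L : W -> Prop) :
  subgroup L -> subgroup (fun x => L (f x)).
Proof.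
move=> sL; split=> [|x y Lx Ly]; first by rewrite raddf0; exact: sL.1.
by rewrite raddfB; exact: sL.2.
Qed.

Lemma subgroup_size_leq (R : nzRingType) n :
  subgroup (fun p : {poly R} => (size p <= n)%N).
Proof.
split=> [|p q p_le q_le]; first by rewrite size_poly0.
by rewrite (leq_trans (size_polyD _ _)) // size_polyN geq_max p_le.
Qed.

Lemma int_subgroupP (I : int -> Prop) :
  subgroup I -> exists d : nat, forall u, I u <-> (d%:Z %| u)%Z.
Proof.
move=> sI; have IM u k : I u -> I (u * k) by rewrite -mulrzz; exact: subgroupMz.
have Iabs u : I u -> I `|u|%N by move=> Iu; rewrite abszEsg mulrC; exact: IM.
pose P k := `[< (0 < k)%N /\ I k%:Z >].
have [exP|noP] := pselect (exists k, P k); last first.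
  exists 0%N => u; rewrite dvd0z; split=> [Iu|/eqP->]; last exact: sI.1.
  apply: contraT => u_neq0; case: noP; exists `|u|%N; apply/asboolP.
  by rewrite absz_gt0 u_neq0; split=> //; exact: Iabs.
case: (ex_minnP exP) => d /asboolP[d_gt0 Id] dmin; exists d => u; split; last first.
  by case/dvdzP=> q ->; rewrite mulrC; exact: IM.
move=> Iu; have d_neq0 : d%:Z != 0 by rewrite eqz_nat -lt0n.
apply/dvdz_mod0P; set r := (u %% d%:Z)%Z; apply/eqP; apply: contraT => r_neq0.
have r_ge0 : 0 <= r := modz_ge0 u d_neq0.
have Ir : I r.
  have -> : r = u - (u %/ d%:Z)%Z * d%:Z.
    by rewrite /r {2}(divz_eq u d%:Z) addrAC subrr add0r.
  by apply: sI.2 => //; rewrite mulrC; exact: IM.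
have /dmin : P `|r|%N by apply/asboolP; rewrite absz_gt0 r_neq0 gez0_abs.
by rewrite leqNgt -ltz_nat gez0_abs // ltz_pmod // ltz_nat.
Qed.

Lemma int_subgroup_separation (I : int -> Prop) u : subgroup I -> ~ I u ->
  exists2 m : nat, (0 < m)%N & forall j k, I j -> u <> j + k * m%:Z.
Proof.
move=> sI nIu; have [d Id] := int_subgroupP sI.
case: (posnP d) => [d0|d_gt0]; last first.
  exists d => // j k /Id dvd_j uE; apply/nIu/Id.
  by rewrite uE rpredD // dvdz_mull // dvdzz.
exists `|u|.+1 => // j k; rewrite Id d0 dvd0z => /eqP-> uE.
have u_neq0 : u != 0 by apply: contra_notN nIu => /eqP->; exact: sI.1.
have := congr1 absz uE; rewrite add0r abszM /=.
move: u_neq0; rewrite -absz_gt0; case: `|k|%N => [|b]; rewrite ?mulSn; lia.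
Qed.

Lemma size_poly_leq_pred (R : nzRingType) (p : {poly R}) n :
  (size p <= n.+1)%N -> p`_n = 0 -> (size p <= n)%N.
Proof.
move=> /leq_sizeP p_le pn0; apply/leq_sizeP => j; rewrite leq_eqVlt.
by case/orP=> [/eqP<- // | /p_le].
Qed.

(* Vectors of Z^n are encoded as integer polynomials of size at most n. *)
Lemma poly_separation n (L : {poly int} -> Prop) (v : {poly int}) :
  subgroup L -> (forall p, L p -> size p <= n)%N -> (size v <= n)%N -> ~ L v ->
  exists2 m : nat, (0 < m)%N & forall z w, L z -> v <> z + w *~ m.
Proof.
elim: n L v => [|n IHn] L v sL L_le v_le nLv.
  by move/size_poly_leq0P: v_le => v0; case: nLv; rewrite v0; exact: sL.1.
pose I u := exists2 z, L z & coefp n z = u.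
have sI : subgroup I := subgroup_image sL (coefp n).
have [[y0 Ly0 /= y0n] | nIvn] := pselect (I v`_n); last first.
  have [m m_gt0 sepI] := int_subgroup_separation sI nIvn.
  exists m => // z w Lz vE; apply: (sepI z`_n w`_n); first by exists z.
  by rewrite vE coefD coefMrz mulrzz.
pose L' z := L z /\ coefp n z = 0.
have sL' : subgroup L' := subgroup_kernel sL (coefp n).
have L'_le p : L' p -> (size p <= n)%N by case=> /L_le; exact: size_poly_leq_pred.
have v'_le : (size (v - y0)%R <= n)%N.
  apply: size_poly_leq_pred; last by rewrite coefB y0n subrr.
  by apply: (subgroup_size_leq _ _).2 => //; exact: L_le.
have nL'v' : ~ L' (v - y0).
  by case=> Lv' _; apply: nLv; rewrite -(subrK y0 v); exact: subgroupD.
have [m' m'_gt0 sep'] := IHn L' (v - y0) sL' L'_le v'_le nL'v'.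
have [d Id] := int_subgroupP sI.
case: (posnP d) => [d0|d_gt0].
  have I_eq0 u : I u -> u = 0 by rewrite Id d0 dvd0z => /eqP.
  exists m' => // z w Lz vE; apply: (sep' (z - y0) w); last by rewrite vE addrAC.
  split; first exact: sL.2.
  by apply: I_eq0; exists (z - y0) => //; exact: sL.2.
have [y1 Ly1 /= y1n] : I d%:Z by apply/Id.
exists (m' * d)%N; first by rewrite muln_gt0 m'_gt0.
move=> z w Lz vE.
(* A multiple of y1 cancels the last coordinate of z - y0. *)
apply: (sep' (z - y0 + y1 *~ (m'%:Z * w`_n)) (w *~ d - y1 *~ w`_n)).
  split; first by apply: (subgroupD sL); [exact: sL.2 | exact: subgroupMz].
  rewrite /= !(coefD, coefN, coefMrz) y1n y0n vE coefD coefMrz PoszM; ring.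
by rewrite vE PoszM; ring.
Qed.

Section LinearCombinations.
Variables (V : zmodType) (s : seq V).

Definition lincomb (p : {poly int}) : V := \sum_(i < size s) s`_i *~ p`_i.

Lemma lincomb_zmod_morphism : zmod_morphism lincomb.
Proof.
by move=> p q; rewrite -sumrB; apply: eq_bigr => i _; rewrite coefB mulrzBr.
Qed.

HB.instance Definition _ := GRing.isZmodMorphism.Build {poly int} V lincomb
  lincomb_zmod_morphism.

Hypothesis s_gen :
  forall x : V, exists c : 'I_(size s) -> int, x = \sum_(i < size s) s`_i *~ c i.

Lemma lincomb_onto x : exists2 p : {poly int}, (size p <= size s)%N & x = lincomb p.
Proof.
have [c ->] := s_gen x.
exists (\poly_(i < size s) if insub i is Some j then c j else 0); first exact: size_poly.
by apply: eq_bigr => i _; rewrite coef_poly ltn_ord valK.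
Qed.

Lemma fg_subgroup_separation (A : V -> Prop) a : subgroup A -> ~ A a ->
  exists2 m : nat, (0 < m)%N & forall b w, A b -> a <> b + w *+ m.
Proof.
move=> sA nAa; pose L (p : {poly int}) := (size p <= size s)%N /\ A (lincomb p).
have sL : subgroup L := subgroupI (subgroup_size_leq _ _) (subgroup_preim lincomb sA).
have [v v_le aE] := lincomb_onto a.
have [|m m_gt0 sepL] := poly_separation sL (fun p => @proj1 _ _) v_le.
  by case=> _; rewrite -aE.
exists m => // b w Ab abw; have [u u_le wE] := lincomb_onto w.
apply: (sepL (v - u *~ m) u); last by rewrite subrK.
split; last by rewrite raddfB raddfMz /= -aE -wE abw pmulrn addrK.
have sS := subgroup_size_leq int (size s).
by apply: sS.2 => //; exact: (subgroupMz sS).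
Qed.
End LinearCombinations.

Section NuRingTheory.
Variable K : nuRing.

Definition nu_mull (y x : K) : K := nu_mul x y.
Definition nu_mulr (x y : K) : K := nu_mul x y.

Lemma nu_mull_nmod_morphism (y : K) : nmod_morphism (nu_mull y).
Proof.
split=> [|x x']; last exact: nu_mulDl.
by apply: (addrI (nu_mul 0 y)); rewrite -nu_mulDl !addr0.
Qed.

Lemma nu_mulr_nmod_morphism (x : K) : nmod_morphism (nu_mulr x).
Proof.
split=> [|y y']; last exact: nu_mulDr.
by apply: (addrI (nu_mul x 0)); rewrite -nu_mulDr !addr0.
Qed.

HB.instance Definition _ (y : K) := GRing.isNmodMorphism.Build K K (nu_mull y)
  (nu_mull_nmod_morphism y).
HB.instance Definition _ (x : K) := GRing.isNmodMorphism.Build K K (nu_mulr x)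
  (nu_mulr_nmod_morphism x).

Lemma nu_mulBl (x x' y : K) : nu_mul (x - x') y = nu_mul x y - nu_mul x' y.
Proof. exact: (raddfB (nu_mull y)). Qed.

Lemma nu_mulBr (x y y' : K) : nu_mul x (y - y') = nu_mul x y - nu_mul x y'.
Proof. exact: (raddfB (nu_mulr x)). Qed.

Lemma nu_mulMnl (x y : K) n : nu_mul (x *+ n) y = nu_mul x y *+ n.
Proof. exact: (raddfMn (nu_mull y)). Qed.

Lemma nu_mulMnr (x y : K) n : nu_mul x (y *+ n) = nu_mul x y *+ n.
Proof. exact: (raddfMn (nu_mulr x)). Qed.

End NuRingTheory.

Local Open Scope quotient_scope.

Section QuotientByMultiples.
Variables (K : nuRing) (m : nat).

Definition multiples : {pred K} := fun x => `[< exists w, x = w *+ m >].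

Lemma multiplesP x : reflect (exists w, x = w *+ m) (x \in multiples).
Proof. exact: asboolP. Qed.

Lemma multiples_zmod_closed : zmod_closed multiples.
Proof.
split=> [|_ _ /multiplesP[x ->] /multiplesP[y ->]]; apply/multiplesP.
  by exists 0; rewrite mul0rn.
by exists (x - y); rewrite mulrnBl.
Qed.

HB.instance Definition _ := GRing.isZmodClosed.Build K multiples
  multiples_zmod_closed.

Lemma multiplesMl x y : x \in multiples -> nu_mul x y \in multiples.
Proof.
by case/multiplesP=> w ->; apply/multiplesP; exists (nu_mul w y); rewrite nu_mulMnl.
Qed.

Lemma multiplesMr x y : y \in multiples -> nu_mul x y \in multiples.
Proof.
by case/multiplesP=> w ->; apply/multiplesP; exists (nu_mul x w); rewrite nu_mulMnr.
Qed.

Local Notation Q := {ideal_quot multiples}.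

Definition quot_mul := lift_op2 Q (@nu_mul K).

Lemma pi_quot_mul : {morph \pi_Q : x y / nu_mul x y >-> quot_mul x y}.
Proof.
move=> x y; unlock quot_mul; apply/eqP; rewrite -Quotient.idealrBE.
set x' := repr _; set y' := repr _.
have -> : nu_mul x y - nu_mul x' y' = nu_mul (x - x') y + nu_mul x' (y - y').
  by rewrite nu_mulBl nu_mulBr addrA subrK.
apply: rpredD; [apply: multiplesMl | apply: multiplesMr];
  by rewrite Quotient.idealrBE reprK.
Qed.
Canonical pi_quot_mul_morph := PiMorph2 pi_quot_mul.

Lemma quot_mulA : associative quot_mul.
Proof. by move=> x y z; rewrite -[x]reprK -[y]reprK -[z]reprK !piE nu_mulA. Qed.

Lemma quot_mulDl : left_distributive quot_mul +%R.
Proof. by move=> x y z; rewrite -[x]reprK -[y]reprK -[z]reprK !piE nu_mulDl. Qed.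

Lemma quot_mulDr : right_distributive quot_mul +%R.
Proof. by move=> x y z; rewrite -[x]reprK -[y]reprK -[z]reprK !piE nu_mulDr. Qed.

Definition quot_nuRing : nuRing := NuRing quot_mulA quot_mulDl quot_mulDr.

Lemma pi_nu_hom : nu_hom (\pi_Q : K -> quot_nuRing).
Proof. by split=> x y /=; rewrite !piE. Qed.

Lemma pi_eq_multiples x y : \pi_Q x = \pi_Q y -> exists w, x = y + w *+ m.
Proof.
move/eqP; rewrite -Quotient.idealrBE => /multiplesP[w xyE].
by exists w; rewrite -xyE addrC subrK.
Qed.

Lemma quot_nuRing_finite : additively_fg K -> (0 < m)%N -> nu_finite quot_nuRing.
Proof.
move=> [s s_gen] m_gt0; have m_neq0 : m%:Z != 0 by rewrite eqz_nat -lt0n.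
pose rep (k : {ffun 'I_(size s) -> 'I_m}) := \pi_Q (\sum_(i < size s) s`_i *+ k i).
exists (codom rep) => q; rewrite -[q]reprK; have [c ->] := s_gen (repr q).
have c_mod_lt i : (`|(c i %% m%:Z)%Z|%N < m)%N.
  by rewrite -ltz_nat gez0_abs ?modz_ge0 // ltz_pmod // ltz_nat.
set k := [ffun i => Ordinal (c_mod_lt i)].
rewrite (_ : \pi_Q _ = rep k) ?codom_f //; apply/eqP.
rewrite -Quotient.idealrBE -sumrB rpred_sum // => i _; apply/multiplesP.
exists (s`_i *~ (c i %/ m%:Z)%Z); rewrite ffunE /= !pmulrn -mulrzA.
by rewrite gez0_abs ?modz_ge0 // -mulrzBr {1}(divz_eq (c i) m%:Z) addrK.
Qed.

End QuotientByMultiples.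

Theorem lemma5 (K : nuRing) : additively_fg K -> finitely_separable K.
Proof.
move=> fgK a A [A0 AB _] /negP nAa; have [s s_gen] := fgK.
have [m m_gt0 sepA] := fg_subgroup_separation s_gen (conj A0 AB) nAa.
exists (quot_nuRing K m), \pi; split.
- exact: quot_nuRing_finite.
- exact: pi_nu_hom.
- by move=> b Ab; apply/eqP => /esym/pi_eq_multiples[w abw]; exact: sepA abw.
Qed.
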